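(* Let $A \in \mathbb{Q}^{m\times n}$ and let $k \le n$ be a positive integer. If $\operatorname{spark}(A) > k$, then there exists a constant $\varepsilon > 0$ with encoding length polynomially bounded by that of $A$ such that $\|Ax\|_2^2 \ge \varepsilon\|x\|_2^2$ for all $x \in \mathbb{R}^n$ with $\|x\|_0 \le k$.
   Context: $\operatorname{spark}(A) := \min\{\|x\|_0 : Ax = 0,\ x\ne 0\}$, where $\|x\|_0$ is the number of nonzero entries of $x$; $\|\cdot\|_2$ is the Euclidean norm. Encoding length refers to binary encoding length of rational numbers. *)

From HB Require Import structures.
From mathcomp Require Import all_boot all_order all_algebra.
From mathcomp Require Import reals.
Set Implicit Arguments. Unset Strict Implicit. Unset Printing Implicit Defensive.
Import Order.TTheory GRing.Theory Num.Theory.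
Local Open Scope ring_scope.

Definition nnz (R : ringType) (n : nat) (x : 'cV[R]_n) : nat :=
  #|[set i : 'I_n | x i ord0 != 0]|.

Definition sqnorm2 (R : ringType) (n : nat) (x : 'cV[R]_n) : R :=
  \sum_(i < n) x i ord0 ^+ 2.

(* spark(A) > k, i.e. min{ ||x||_0 : A x = 0, x <> 0 } > k, with the
   convention min(empty) = +infinity: every nonzero kernel vector has more
   than k nonzero entries. *)
Definition spark_gt (m n : nat) (A : 'M[rat]_(m, n)) (k : nat) : Prop :=
  forall x : 'cV[rat]_n, x != 0 -> A *m x = 0 -> (k < nnz x)%N.

(* Binary encoding length (Schrijver's convention):
   <z> = 1 + ceil(log2(|z|+1)) for integers, <p/q> = <p> + <q> for a
   rational in lowest terms, <A> = m n + sum of the entry sizes. *)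
Definition enc_int (z : int) : nat := (1 + up_log 2 `|z|%N.+1)%N.
Definition enc_rat (r : rat) : nat := (enc_int (numq r) + enc_int (denq r))%N.
Definition enc_mx (m n : nat) (A : 'M[rat]_(m, n)) : nat :=
  (m * n + \sum_(i < m) \sum_(j < n) enc_rat (A i j))%N.

(* Clear denominators: d A = B with d and the entries of B integers of size at
   most 2^<A>.  For x supported on a set S of at most k columns, the integer
   matrix M = B_S^T B_S + diag(1_(j notin S)) is nonsingular, since
   v^T M v = |B_S v|^2 + sum_(j notin S) v_j^2 vanishes only on kernel vectors
   of A supported on S, which spark(A) > k rules out.  As M x = B_S^T B x,
   Cramer's rule gives det(M) x = adj(M) B_S^T (d A x), and |det M| >= 1 yields
   |x|^2 <= C |A x|^2 with C = |adj M|_F^2 |B_S|_F^2 d^2.  Bounding the Leibniz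
   expansions entrywise gives C <= 2^(18 <A>^2), so eps = 2^-(18 <A>^2). *)

From HB Require Import structures.
From mathcomp Require Import all_boot all_order all_algebra perm.
From mathcomp Require Import reals ring lra zify.
Import Order.TTheory GRing.Theory Num.Theory.
Set Implicit Arguments. Unset Strict Implicit. Unset Printing Implicit Defensive.

Lemma leq_wexp2r m1 m2 e : m1 <= m2 -> m1 ^ e <= m2 ^ e.
Proof. by move=> le_m; elim: e => // e IH; rewrite !expnS leq_mul. Qed.

Lemma fact_le_expn p : p`! <= p ^ p.
Proof.
elim: p => // p IH; rewrite factS expnS leq_mul //.
exact/(leq_trans IH)/leq_wexp2r.
Qed.

Lemma gram_bound_le_exp2 N n m d : 0 < N -> n <= N -> m <= N -> d <= 2 ^ N ->
  n * n * ((n.-1)`! * (m * (2 ^ N) ^ 2 + 1) ^ n.-1) ^ 2 * (n * m * (2 ^ N) ^ 2) * d ^ 2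
  <= 2 ^ (18 * N * N).
Proof.
move=> N_gt0 n_le m_le d_le; set B := 2 ^ N.
have B_ge2 : 2 <= B by rewrite -{1}(expn1 2) leq_exp2l.
have N_lt : N < B by exact: ltn_expl.
have nn_le : n * n <= B ^ 2 by rewrite expnS expn1 leq_mul //; lia.
have nm_le : n * m * B ^ 2 <= B ^ 4.
  by rewrite (expnD B 2 2) leq_mul // expnS expn1 leq_mul //; lia.
have L_le : m * B ^ 2 + 1 <= B ^ 4.
  have : m * B ^ 2 <= B ^ 3 by rewrite (expnS B 2) leq_mul2r; lia.
  by rewrite !expnS expn0 muln1; nia.
have fact_le : (n.-1)`! <= B ^ N.
  apply: (leq_trans (fact_le_expn _)); apply: (@leq_trans (B ^ n.-1)).
    by apply: leq_wexp2r; lia.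
  by apply: leq_pexp2l; lia.
have adj_le : (n.-1)`! * (m * B ^ 2 + 1) ^ n.-1 <= B ^ (5 * N).
  rewrite mulSn expnD leq_mul // (expnM B 4 N); apply: (leq_trans (leq_wexp2r _ L_le)).
  by rewrite -!expnM; apply: leq_pexp2l => //; nia.
apply: (@leq_trans (B ^ 2 * (B ^ (5 * N)) ^ 2 * B ^ 4 * B ^ 2)).
  by repeat apply: leq_mul => //; apply: leq_wexp2r.
rewrite -expnM -!expnD /B -expnM leq_exp2l //; nia.
Qed.

Local Open Scope ring_scope.

Definition sqfrob (R : pzRingType) p q (C : 'M[R]_(p, q)) : R :=
  \sum_i \sum_j C i j ^+ 2.

Lemma map_sqfrob (R R' : pzRingType) (f : {rmorphism R -> R'}) p q (C : 'M[R]_(p, q)) :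
  sqfrob (map_mx f C) = f (sqfrob C).
Proof.
rewrite /sqfrob rmorph_sum; apply: eq_bigr => i _.
by rewrite rmorph_sum; apply: eq_bigr => j _; rewrite mxE rmorphXn.
Qed.

Section SquaredNorms.
Variable R : realDomainType.

Lemma sqnorm2_ge0 q (y : 'cV[R]_q) : 0 <= sqnorm2 y.
Proof. by apply: sumr_ge0 => i _; exact: sqr_ge0. Qed.

Lemma sqfrob_ge0 p q (C : 'M[R]_(p, q)) : 0 <= sqfrob C.
Proof. by apply: sumr_ge0 => i _; apply: sumr_ge0 => j _; exact: sqr_ge0. Qed.

Lemma sqnorm2Z q (a : R) (y : 'cV[R]_q) : sqnorm2 (a *: y) = a ^+ 2 * sqnorm2 y.
Proof. by rewrite /sqnorm2 mulr_sumr; apply: eq_bigr => i _; rewrite mxE exprMn. Qed.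

Lemma sqnorm2_eq0 q (y : 'cV[R]_q) : sqnorm2 y = 0 -> y = 0.
Proof.
move=> y0; apply/matrixP => i a; rewrite (ord1 a) mxE; apply/eqP.
by rewrite -sqrf_eq0; apply/eqP/(psumr_eq0P _ y0) => // j _; exact: sqr_ge0.
Qed.

Lemma trmx_mul_sqnorm2 q (y : 'cV[R]_q) : (y^T *m y) ord0 ord0 = sqnorm2 y.
Proof. by rewrite mxE; apply: eq_bigr => i _; rewrite mxE expr2. Qed.

(* Lagrange's identity: the defect is [1/2 sum_(j,l) (c j y l - c l y j)^2]. *)
Lemma cauchy_schwarz_sum p (c y : 'I_p -> R) :
  (\sum_j c j * y j) ^+ 2 <= (\sum_j c j ^+ 2) * (\sum_j y j ^+ 2).
Proof.
have defect_ge0 : 0 <= \sum_j \sum_l (c j * y l - c l * y j) ^+ 2.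
  by apply: sumr_ge0 => j _; apply: sumr_ge0 => l _; exact: sqr_ge0.
have prod_sq : \sum_j \sum_l c j ^+ 2 * y l ^+ 2 = (\sum_j c j ^+ 2) * (\sum_j y j ^+ 2).
  by rewrite mulr_suml; apply: eq_bigr => j _; rewrite mulr_sumr.
have sq_sum : \sum_j \sum_l (c j * y j) * (c l * y l) = (\sum_j c j * y j) ^+ 2.
  by rewrite expr2 mulr_suml; apply: eq_bigr => j _; rewrite mulr_sumr.
have expand : \sum_j \sum_l (c j * y l - c l * y j) ^+ 2 =
   \sum_j \sum_l c j ^+ 2 * y l ^+ 2 + \sum_j \sum_l c l ^+ 2 * y j ^+ 2
   - 2 * \sum_j \sum_l (c j * y j) * (c l * y l).
  rewrite -big_split /= mulr_sumr -sumrB; apply: eq_bigr => j _.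
  rewrite -big_split /= mulr_sumr -sumrB; apply: eq_bigr => l _.
  ring.
have swap_sq : \sum_j \sum_l c l ^+ 2 * y j ^+ 2 = (\sum_j c j ^+ 2) * (\sum_j y j ^+ 2).
  by rewrite exchange_big.
move: defect_ge0; rewrite expand prod_sq swap_sq sq_sum; lra.
Qed.

Lemma sqnorm2_mulmx_le p q (C : 'M[R]_(p, q)) (y : 'cV[R]_q) :
  sqnorm2 (C *m y) <= sqfrob C * sqnorm2 y.
Proof.
rewrite /sqnorm2 /sqfrob mulr_suml; apply: ler_sum => i _.
by rewrite mxE; exact: cauchy_schwarz_sum.
Qed.

Lemma sqnorm2_le_adj n m (M : 'M[R]_n) (G : 'M[R]_(n, m)) (x : 'cV[R]_n) (y : 'cV[R]_m) :
  M *m x = G *m y -> 1 <= \det M ^+ 2 ->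
  sqnorm2 x <= sqfrob (\adj M) * sqfrob G * sqnorm2 y.
Proof.
move=> Mx det_ge1.
have detMx : \det M *: x = \adj M *m (G *m y).
  by rewrite -Mx mulmxA mul_adj_mx mul_scalar_mx.
have x_le : sqnorm2 x <= sqnorm2 (\det M *: x).
  rewrite sqnorm2Z -{1}[sqnorm2 x]mul1r.
  by apply: ler_wpM2r => //; exact: sqnorm2_ge0.
apply: (le_trans x_le); rewrite detMx -mulrA.
apply: (le_trans (sqnorm2_mulmx_le _ _)).
by apply: ler_wpM2l; [exact: sqfrob_ge0 | exact: sqnorm2_mulmx_le].
Qed.

End SquaredNorms.

Section EntryBounds.
Variable R : realDomainType.

Lemma sqfrob_le p q (C : 'M[R]_(p, q)) (L : R) :
  (forall i j, `|C i j| <= L) -> sqfrob C <= (p * q)%:R * L ^+ 2.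
Proof.
move=> C_le; rewrite /sqfrob.
have -> : (p * q)%:R * L ^+ 2 = \sum_(i : 'I_p) \sum_(j : 'I_q) L ^+ 2.
  by rewrite !sumr_const !card_ord -mulrnA mulr_natl mulnC.
apply: ler_sum => i _; apply: ler_sum => j _.
by rewrite -real_normK ?num_real // !expr2 ler_pM.
Qed.

Lemma normr_det_le p (C : 'M[R]_p) (L : R) :
  (forall i j, `|C i j| <= L) -> `|\det C| <= p`!%:R * L ^+ p.
Proof.
move=> C_le; apply: (le_trans (ler_norm_sum _ _ _)).
have -> : p`!%:R * L ^+ p = \sum_(s : 'S_p) L ^+ p.
  by rewrite sumr_const card_Sn mulr_natl.
apply: ler_sum => s _.
rewrite normrM normrX normrN normr1 expr1n mul1r normr_prod.
have -> : L ^+ p = \prod_(i : 'I_p) L by rewrite prodr_const card_ord.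
by apply: ler_prod => i _; rewrite normr_ge0 C_le.
Qed.

Lemma sqfrob_adj_le p (C : 'M[R]_p) (L : R) :
  (forall i j, `|C i j| <= L) ->
  sqfrob (\adj C) <= (p * p)%:R * ((p.-1)`!%:R * L ^+ p.-1) ^+ 2.
Proof.
move=> C_le; apply: sqfrob_le => i j.
rewrite mxE /cofactor normrM normrX normrN normr1 expr1n mul1r.
by apply: normr_det_le => a b; rewrite !mxE.
Qed.

End EntryBounds.

Definition vsupp (R : pzRingType) n (x : 'cV[R]_n) : {set 'I_n} :=
  [set i | x i ord0 != 0].

Section SupportGram.
Variables (R : comPzRingType) (m n : nat).
Implicit Types (B : 'M[R]_(m, n)) (S : {set 'I_n}) (x : 'cV[R]_n).

Definition col_restrict B S : 'M[R]_(m, n) :=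
  \matrix_(i, j) (if j \in S then B i j else 0).

Definition support_gram B S : 'M[R]_n :=
  (col_restrict B S)^T *m col_restrict B S + diag_mx (\row_j (j \notin S)%:R).

Lemma col_restrict_mulmx B S x : (forall j, j \notin S -> x j ord0 = 0) ->
  col_restrict B S *m x = B *m x.
Proof.
move=> x_off; apply/matrixP => i a; rewrite !mxE; apply: eq_bigr => j _.
by rewrite mxE (ord1 a); case: ifPn => // /x_off ->; rewrite !mulr0.
Qed.

Lemma support_gram_mulmx B S x : (forall j, j \notin S -> x j ord0 = 0) ->
  support_gram B S *m x = (col_restrict B S)^T *m (B *m x).
Proof.
move=> x_off; rewrite mulmxDl -mulmxA col_restrict_mulmx // mul_diag_mx.
rewrite [X in _ + X](_ : _ = 0) ?addr0 //; apply/matrixP => i a.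
by rewrite !mxE (ord1 a); case: (boolP (i \in S)) => [|/x_off ->]; rewrite ?mul0r ?mulr0.
Qed.

Lemma support_gram_form B S x :
  (x^T *m support_gram B S *m x) ord0 ord0 =
  ((col_restrict B S *m x)^T *m (col_restrict B S *m x)) ord0 ord0
  + \sum_(j | j \notin S) x j ord0 ^+ 2.
Proof.
rewrite mulmxDr mulmxDl trmx_mul !mulmxA mxE; congr (_ + _).
rewrite mul_mx_diag mxE (bigID (fun j => j \in S)) /= big1 ?add0r.
  by apply: eq_bigr => j jS; rewrite !mxE jS mulr1 expr2.
by move=> j jS; rewrite !mxE jS mulr0 mul0r.
Qed.

End SupportGram.

Section MapSupportGram.
Variables (R R' : comPzRingType) (f : {rmorphism R -> R'}) (m n : nat).
Variables (B : 'M[R]_(m, n)) (S : {set 'I_n}).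

Lemma map_col_restrict : map_mx f (col_restrict B S) = col_restrict (map_mx f B) S.
Proof. by apply/matrixP => i j; rewrite !mxE; case: ifP; rewrite ?rmorph0. Qed.

Lemma map_support_gram : map_mx f (support_gram B S) = support_gram (map_mx f B) S.
Proof.
rewrite /support_gram map_mxD map_mxM -map_trmx map_col_restrict map_diag_mx.
congr (_ + _).
by congr diag_mx; apply/matrixP => i j; rewrite !mxE rmorph_nat.
Qed.

End MapSupportGram.

Lemma support_gram_det_neq0 (R : realDomainType) m n (B : 'M[R]_(m, n)) (S : {set 'I_n}) :
  (forall v : 'cV[R]_n, B *m v = 0 -> (forall j, j \notin S -> v j ord0 = 0) -> v = 0) ->
  \det (support_gram B S) != 0.
Proof.
move=> ker_off_S; apply/negP => /det0P [v v_neq0 vM].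
set x := v^T; set y := col_restrict B S *m x.
have form0 : sqnorm2 y + \sum_(j | j \notin S) x j ord0 ^+ 2 = 0.
  by rewrite -trmx_mul_sqnorm2 -support_gram_form /x trmxK vM mul0mx mxE.
have off_ge0 : 0 <= \sum_(j | j \notin S) x j ord0 ^+ 2.
  by apply: sumr_ge0 => j _; exact: sqr_ge0.
move/eqP: form0; rewrite paddr_eq0 ?sqnorm2_ge0 // => /andP[/eqP y0 /eqP off0].
have x_off j : j \notin S -> x j ord0 = 0.
  move=> jS; apply/eqP; rewrite -sqrf_eq0; apply/eqP.
  by apply: (psumr_eq0P _ off0) => // i _; exact: sqr_ge0.
have : x = 0.
  by apply: (ker_off_S _ _ x_off); rewrite -(col_restrict_mulmx B x_off); exact: sqnorm2_eq0.
by move/eqP; rewrite trmx_eq0 (negPf v_neq0).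
Qed.

Section EntryBoundsGram.
Variables (R : realDomainType) (m n : nat) (B : 'M[R]_(m, n)) (S : {set 'I_n}) (K : R).
Hypothesis B_le : forall i j, `|B i j| <= K.

Lemma col_restrict_le i j : `|col_restrict B S i j| <= K.
Proof. by rewrite mxE; case: ifP; rewrite ?normr0 ?(le_trans _ (B_le i j)). Qed.

Lemma support_gram_le i j : `|support_gram B S i j| <= m%:R * K ^+ 2 + 1.
Proof.
rewrite !mxE; apply: (le_trans (ler_normD _ _)); apply: lerD.
  apply: (le_trans (ler_norm_sum _ _ _)).
  have -> : m%:R * K ^+ 2 = \sum_(l < m) K ^+ 2 by rewrite sumr_const card_ord mulr_natl.
  apply: ler_sum => l _; rewrite mxE normrM expr2.
  by apply: ler_pM => //; exact: col_restrict_le.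
by case: (i == j); case: (i \in S); rewrite /= ?mulr1n ?mulr0n ?normr0 ?normr1.
Qed.

End EntryBoundsGram.

Lemma absz_le_exp2_enc z : (`|z| <= 2 ^ enc_int z)%N.
Proof.
apply: (@leq_trans (2 ^ up_log 2 `|z|.+1)); first exact/ltnW/up_logP.
by rewrite leq_exp2l // add1n.
Qed.

Lemma numq_le_exp2_enc a : (`|numq a| <= 2 ^ enc_rat a)%N.
Proof. by apply: leq_trans (absz_le_exp2_enc _) _; rewrite leq_exp2l // leq_addr. Qed.

Lemma denq_le_exp2_enc a : (`|denq a| <= 2 ^ enc_rat a)%N.
Proof. by apply: leq_trans (absz_le_exp2_enc _) _; rewrite leq_exp2l // leq_addl. Qed.

Section ClearDenominators.
Variables (m n : nat) (A : 'M[rat]_(m, n)).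

Definition denom_mx : int := \prod_(p : 'I_m * 'I_n) denq (A p.1 p.2).

Definition numer_mx : 'M[int]_(m, n) :=
  \matrix_(i, j) (numq (A i j) * \prod_(p | p != (i, j)) denq (A p.1 p.2)).

Lemma denom_mx_gt0 : 0 < denom_mx.
Proof. by apply: prodr_gt0 => p _; exact: denq_gt0. Qed.

Lemma numer_mxE i j : (numer_mx i j)%:~R = denom_mx%:~R * A i j.
Proof. by rewrite mxE /denom_mx [in RHS](bigD1 (i, j)) //= !intrM numqE; ring. Qed.

Lemma map_numer_mx (F : numFieldType) :
  map_mx intr numer_mx = denom_mx%:~R *: map_mx (ratr : rat -> F) A.
Proof.
apply/matrixP => i j.
by rewrite [LHS]mxE -[in LHS]ratr_int numer_mxE rmorphM /= ratr_int !mxE.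
Qed.

Let sum_enc := (\sum_(p : 'I_m * 'I_n) enc_rat (A p.1 p.2))%N.

Let sum_enc_le : (sum_enc <= enc_mx A)%N.
Proof. by rewrite /sum_enc /enc_mx pair_big /= leq_addl. Qed.

Let absz_prod (P : pred ('I_m * 'I_n)) (F : 'I_m * 'I_n -> int) :
  absz (\prod_(p | P p) F p) = (\prod_(p | P p) absz (F p))%N.
Proof. exact: (big_morph _ abszM (erefl _)). Qed.

Lemma denom_mx_le : (`|denom_mx| <= 2 ^ enc_mx A)%N.
Proof.
apply: (leq_trans _ (leq_pexp2l _ sum_enc_le)) => //.
rewrite absz_prod /sum_enc expn_sum.
by apply: leq_prod => p _; exact: denq_le_exp2_enc.
Qed.

Lemma numer_mx_le i j : (`|numer_mx i j| <= 2 ^ enc_mx A)%N.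
Proof.
apply: (leq_trans _ (leq_pexp2l _ sum_enc_le)) => //.
rewrite mxE abszM absz_prod /sum_enc [X in (_ <= 2 ^ X)%N](bigD1 (i, j)) //= expnD expn_sum.
apply: leq_mul; first exact: numq_le_exp2_enc.
by apply: leq_prod => p _; exact: denq_le_exp2_enc.
Qed.

End ClearDenominators.

Definition support_constant m n (A : 'M[rat]_(m, n)) (S : {set 'I_n}) : int :=
  sqfrob (\adj (support_gram (numer_mx A) S)) * sqfrob (col_restrict (numer_mx A) S)^T
  * denom_mx A ^+ 2.

Lemma spark_gt_rows_gt0 m n (A : 'M[rat]_(m, n)) k :
  (0 < k)%N -> (k <= n)%N -> spark_gt A k -> (0 < m)%N.
Proof.
case: m A => // A k_gt0 k_le sparkA; pose i0 : 'I_n := Ordinal (leq_trans k_gt0 k_le).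
have e_neq0 : delta_mx i0 ord0 != 0 :> 'cV[rat]_n.
  by apply/eqP => /matrixP/(_ i0 ord0)/eqP; rewrite !mxE !eqxx oner_eq0.
have := sparkA _ e_neq0 (flatmx0 _); rewrite /nnz.
have -> : [set i | (delta_mx i0 ord0 : 'cV[rat]_n) i ord0 != 0] = [set i0].
  by apply/setP => i; rewrite !inE !mxE eqxx andbT; case: (i == i0); rewrite ?oner_eq0.
by rewrite cards1 ltnNge k_gt0.
Qed.

Section SparseVectors.
Variables (m n : nat) (A : 'M[rat]_(m, n)) (k : nat).
Hypothesis sparkA : spark_gt A k.

Lemma support_gram_numer_det_neq0 (S : {set 'I_n}) : (#|S| <= k)%N ->
  \det (support_gram (numer_mx A) S) != 0.
Proof.
move=> S_le; rewrite -(intr_eq0 rat) -det_map_mx map_support_gram map_numer_mx.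
apply: support_gram_det_neq0 => v Av0 v_off; apply/eqP/negPn/negP => v_neq0.
have ratr_id : map_mx ratr A = A by apply/matrixP => i j; rewrite mxE; exact: divq_num_den.
have : (k < nnz v)%N.
  apply: sparkA v_neq0 _; move/eqP: Av0.
  by rewrite -scalemxAl ratr_id scaler_eq0 intr_eq0 gt_eqF ?denom_mx_gt0 // => /eqP.
rewrite ltnNge (leq_trans _ S_le) //; apply/subset_leq_card/subsetP => j.
by rewrite inE; apply: contraR => /v_off ->; rewrite eqxx.
Qed.

Lemma sqnorm2_le_sparse (R : realFieldType) (x : 'cV[R]_n) : (nnz x <= k)%N ->
  sqnorm2 x <= (support_constant A (vsupp x))%:~R * sqnorm2 (map_mx ratr A *m x).
Proof.
move=> x_sparse; set S := vsupp x; set B := numer_mx A.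
have x_off j : j \notin S -> x j ord0 = 0 by rewrite inE negbK => /eqP.
have det_ge1 : 1 <= \det (map_mx (intr : int -> R) (support_gram B S)) ^+ 2.
  rewrite det_map_mx -rmorphXn ler1z.
  by move: (support_gram_numer_det_neq0 x_sparse); set d := \det _; lia.
have gram_x : map_mx intr (support_gram B S) *m x =
    (col_restrict (map_mx intr B) S)^T *m (map_mx intr B *m x).
  by rewrite map_support_gram support_gram_mulmx.
have := sqnorm2_le_adj gram_x det_ge1.
rewrite -map_col_restrict map_trmx -map_mx_adj !map_sqfrob.
by rewrite /B map_numer_mx -scalemxAl sqnorm2Z mulrA -rmorphXn -!rmorphM.
Qed.

End SparseVectors.

Lemma support_constant_le m n (A : 'M[rat]_(m, n)) (S : {set 'I_n}) :
  (0 < m)%N -> (0 < n)%N -> support_constant A S <= (2 ^ (18 * enc_mx A * enc_mx A))%:Z.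
Proof.
move=> m_gt0 n_gt0; rewrite /support_constant; set N := enc_mx A; set B := numer_mx A.
have mn_le : (m * n <= N)%N by rewrite leq_addr.
have n_le : (n <= N)%N by apply: leq_trans mn_le; rewrite leq_pmull.
have m_le : (m <= N)%N by apply: leq_trans mn_le; rewrite leq_pmulr.
have B_le i j : `|B i j| <= 2 ^+ N.
  by rewrite -natrX natz -abszE lez_nat numer_mx_le.
have := gram_bound_le_exp2 (leq_trans n_gt0 n_le) n_le m_le (denom_mx_le A).
rewrite -lez_nat -!natz !(natrM, natrX, natrD) (natz `|denom_mx A|) abszE.
rewrite gtr0_norm ?denom_mx_gt0 // -!natrM.
have D_ge0 := ltW (denom_mx_gt0 A).
apply: le_trans; apply: ler_pM; rewrite ?mulr_ge0 ?sqfrob_ge0 //.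
apply: ler_pM; rewrite ?sqfrob_ge0 //.
  by apply: sqfrob_adj_le; exact: support_gram_le.
by apply: sqfrob_le => i j; rewrite mxE; exact: col_restrict_le.
Qed.

Lemma enc_rat_inv_exp2 P : (enc_rat ((2 ^ P)%:R)^-1 <= P + 4)%N.
Proof.
have cop : coprime `|1%:Z| `|(2 ^ P)%:Z| by rewrite coprime1n.
have -> : ((2 ^ P)%:R)^-1 = 1%:~R / (2 ^ P)%:Z%:~R :> rat by rewrite div1r.
rewrite /enc_rat (coprimeq_num cop) (coprimeq_den cop) eqz_nat expn_eq0 /=.
rewrite gtr0_sg ?ltz_nat ?expn_gt0 // mulr1 /enc_int /= up_lognn //.
have : (up_log 2 (2 ^ P).+1 <= P.+1)%N.
  by apply: up_log_min => //; rewrite expnS; have := expn_gt0 2 P; lia.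
lia.
Qed.

Theorem lemma5 :
  exists c d : nat,
  forall (m n : nat) (A : 'M[rat]_(m, n)) (k : nat),
    (0 < k)%N -> (k <= n)%N -> spark_gt A k ->
    exists eps : rat,
      0 < eps /\
      (enc_rat eps <= c * (enc_mx A).+1 ^ d)%N /\
      forall (R : realType) (x : 'cV[R]_n),
        (nnz x <= k)%N ->
        (ratr eps : R) * sqnorm2 x <= sqnorm2 (map_mx ratr A *m x).
Proof.
exists 22%N, 2%N => m n A k k_gt0 k_le sparkA.
set P := (18 * enc_mx A * enc_mx A)%N.
have m_gt0 := spark_gt_rows_gt0 k_gt0 k_le sparkA.
have n_gt0 := leq_trans k_gt0 k_le.
exists ((2 ^ P)%:R)^-1; split; [|split].
- by rewrite invr_gt0 ltr0n expn_gt0.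
- by apply: (leq_trans (enc_rat_inv_exp2 P)); rewrite /P; nia.
move=> R x x_sparse; have P_gt0 : (0 : R) < (2 ^ P)%:R by rewrite ltr0n expn_gt0.
rewrite fmorphV rmorph_nat ler_pdivrMl //.
apply: (le_trans (sqnorm2_le_sparse sparkA x_sparse)).
apply: ler_wpM2r; first exact: sqnorm2_ge0.
by rewrite pmulrn ler_int support_constant_le.
Qed.
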